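(* Let $k\ge1$ and $B>0$ be constants and let $F=(F_L,F_R)$ be as defined below. Then $F$ is monotonically nondecreasing on $[0,1]^2$: if $(\alpha_L,\alpha_R),(\alpha_L',\alpha_R')\in[0,1]^2$ with $\alpha_L\le\alpha_L'$ and $\alpha_R\le\alpha_R'$, then $F_L(\alpha_L,\alpha_R)\le F_L(\alpha_L',\alpha_R')$ and $F_R(\alpha_L,\alpha_R)\le F_R(\alpha_L',\alpha_R')$. In particular, at every point with $\sqrt{\alpha_L\alpha_R}B>1$, one has $1-(1-\theta_L)(1-\theta_R)B^2\alpha_L\alpha_R>0$, where $(\theta_L,\theta_R)$ is as in the definition of $F$.
   Context: The map $F$: for $(\alpha_L,\alpha_R)\in[0,1]^2$, if $\sqrt{\alpha_L\alpha_R}\,B\le1$ set $(\theta_L,\theta_R)=(0,0)$; otherwise let $(\theta_L,\theta_R)$ be the unique solution with $\theta_L,\theta_R>0$ of $\exp(-B\sqrt k\,\alpha_R\theta_R)=1-\theta_L$ and $\exp(-\frac{B}{\sqrt k}\alpha_L\theta_L)=1-\theta_R$. Then $F(\alpha_L,\alpha_R)=\big(\tfrac12(1+\theta_L\alpha_L),\tfrac12(1+\theta_R\alpha_R)\big)$. *)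

From Stdlib Require Import Reals Lra ClassicalEpsilon.
Open Scope R_scope.

Definition is_theta_sol (B k aL aR : R) (t : R * R) : Prop :=
  0 < fst t /\ 0 < snd t /\
  exp (- (B * sqrt k * aR * snd t)) = 1 - fst t /\
  exp (- (B / sqrt k * aL * fst t)) = 1 - snd t.

Definition theta (B k aL aR : R) : R * R :=
  if Rle_dec (sqrt (aL * aR) * B) 1 then (0, 0)
  else epsilon (inhabits (0, 0)) (is_theta_sol B k aL aR).

Definition F (B k aL aR : R) : R * R :=
  ((1 + fst (theta B k aL aR) * aL) / 2, (1 + snd (theta B k aL aR) * aR) / 2).

(** The first component of a positive solution is a fixed point of the composite
    saturation map [x |-> sat a (sat b x)], where [sat c x = 1 - exp(-c x)] and
    [a = B sqrt k aR], [b = B aL / sqrt k].  Since [sat c x / x] is strictly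
    decreasing, so is the ratio of the composite map; as the map is also
    nondecreasing in [a] and [b], its positive fixed point moves up when [a] and
    [b] do, which gives the monotonicity of [F].  Existence of that fixed point
    follows from the intermediate value theorem, because the slope [a b] of the
    map at [0] exceeds [1].  The strict inequality is the product of the two
    strict bounds [theta_L > a theta_R (1 - theta_L)] and
    [theta_R > b theta_L (1 - theta_R)], both instances of [1 - e^-w > w e^-w]. *)

From Stdlib Require Import Reals Lra ClassicalEpsilon.
Open Scope R_scope.

Lemma exp_le_compat (x y : R) : x <= y -> exp x <= exp y.
Proof. intros [Hlt | ->]; [left; apply exp_increasing |]; lra. Qed.

Lemma exp_mul_exp_opp (w : R) : exp w * exp (- w) = 1.
Proof. rewrite <- exp_plus, Rplus_opp_r; apply exp_0. Qed.

Lemma mul_exp_opp_le (w : R) : w * exp (- w) <= 1 - exp (- w).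
Proof.
  assert (H := exp_ineq1_le w); assert (E := exp_mul_exp_opp w).
  assert (P := exp_pos (- w)); nra.
Qed.

Lemma mul_exp_opp_lt (w : R) : w <> 0 -> w * exp (- w) < 1 - exp (- w).
Proof.
  intro Hw; assert (H := exp_ineq1 w Hw); assert (E := exp_mul_exp_opp w).
  assert (P := exp_pos (- w)); nra.
Qed.

Lemma one_sub_exp_opp_ratio_lt (u v : R) :
  0 < u < v -> u * (1 - exp (- v)) < v * (1 - exp (- u)).
Proof.
  intros [Hu Huv].
  assert (Hv : exp (- u) * (1 - (v - u)) < exp (- v)).
  { replace (- v) with (- u + - (v - u)) by ring; rewrite exp_plus.
    assert (H := exp_ineq1 (- (v - u)) ltac:(lra)); assert (P := exp_pos (- u)); nra. }
  assert (Hu1 : exp (- u) * (1 + u) < 1).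
  { assert (H := exp_ineq1 u ltac:(lra)); assert (E := exp_mul_exp_opp u).
    assert (P := exp_pos (- u)); nra. }
  nra.
Qed.

Definition sat (c x : R) : R := 1 - exp (- (c * x)).

Lemma sat_lt1 (c x : R) : sat c x < 1.
Proof. unfold sat; assert (P := exp_pos (- (c * x))); lra. Qed.

Lemma sat_le_mul (c x : R) : sat c x <= c * x.
Proof. unfold sat; assert (H := exp_ineq1_le (- (c * x))); lra. Qed.

Lemma mul_exp_opp_le_sat (c x : R) : c * x * exp (- (c * x)) <= sat c x.
Proof. apply mul_exp_opp_le. Qed.

Lemma sat_le_compat (c c' x x' : R) :
  0 <= c <= c' -> 0 <= x <= x' -> sat c x <= sat c' x'.
Proof.
  intros Hc Hx; unfold sat.
  assert (exp (- (c' * x')) <= exp (- (c * x))) by (apply exp_le_compat; nra); lra.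
Qed.

Lemma sat_ge0 (c x : R) : 0 <= c -> 0 <= x -> 0 <= sat c x.
Proof.
  intros Hc Hx; replace 0 with (sat 0 0) by (unfold sat; rewrite Rmult_0_l, Ropp_0, exp_0; ring).
  apply sat_le_compat; lra.
Qed.

Lemma sat_lt_compat (c x x' : R) : 0 < c -> x < x' -> sat c x < sat c x'.
Proof.
  intros Hc Hx; unfold sat.
  assert (exp (- (c * x')) < exp (- (c * x))) by (apply exp_increasing; nra); lra.
Qed.

Lemma sat_gt0 (c x : R) : 0 < c -> 0 < x -> 0 < sat c x.
Proof. intros Hc Hx; apply Rle_lt_trans with (sat c 0); [apply sat_ge0 | apply sat_lt_compat]; lra. Qed.

Lemma sat_ratio_lt (c x1 x2 : R) :
  0 < c -> 0 < x1 < x2 -> x1 * sat c x2 < x2 * sat c x1.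
Proof.
  intros Hc Hx; unfold sat.
  assert (H := one_sub_exp_opp_ratio_lt (c * x1) (c * x2) ltac:(split; nra)).
  apply (Rmult_lt_reg_l c); [lra | nra].
Qed.

Definition sat2 (a b x : R) : R := sat a (sat b x).

Lemma sat2_lt1 (a b x : R) : sat2 a b x < 1.
Proof. apply sat_lt1. Qed.

Lemma sat2_le_compat (a a' b b' x : R) :
  0 <= a <= a' -> 0 <= b <= b' -> 0 <= x -> sat2 a b x <= sat2 a' b' x.
Proof.
  intros Ha Hb Hx; unfold sat2; apply sat_le_compat; [lra |].
  split; [apply sat_ge0 | apply sat_le_compat]; lra.
Qed.

Lemma sat2_ratio_lt (a b x1 x2 : R) :
  0 < a -> 0 < b -> 0 < x1 < x2 -> x1 * sat2 a b x2 < x2 * sat2 a b x1.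
Proof.
  intros Ha Hb Hx; unfold sat2.
  assert (Hy1 := sat_gt0 b x1 Hb ltac:(lra)).
  assert (Hy12 := sat_lt_compat b x1 x2 Hb ltac:(lra)).
  assert (Rb := sat_ratio_lt b x1 x2 Hb Hx).
  assert (Ra := sat_ratio_lt a _ _ Ha (conj Hy1 Hy12)).
  assert (Hz2 := sat_gt0 a (sat b x2) Ha ltac:(lra)).
  set (y1 := sat b x1) in *; set (y2 := sat b x2) in *.
  set (z1 := sat a y1) in *; set (z2 := sat a y2) in *.
  assert (S1 : x1 * y2 * (y1 * z2) < x2 * y1 * (y1 * z2)) by (apply Rmult_lt_compat_r; nra).
  assert (S2 : x2 * y1 * (y1 * z2) < x2 * y1 * (y2 * z1)) by (apply Rmult_lt_compat_l; nra).
  apply (Rmult_lt_reg_l (y1 * y2)); nra.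
Qed.

Lemma sat2_ge_quadratic (a b x : R) :
  0 <= a -> 0 <= b -> 0 <= x -> a * b * x * (1 - (a + 1) * b * x) <= sat2 a b x.
Proof.
  intros Ha Hb Hx; unfold sat2; set (y := sat b x).
  assert (Hy : b * x * exp (- (b * x)) <= y) by apply mul_exp_opp_le_sat.
  assert (Hyb : y <= b * x) by apply sat_le_mul.
  assert (Hexp : exp (- (a * (b * x))) <= exp (- (a * y))) by (apply exp_le_compat; nra).
  assert (Hlin : 1 - (a + 1) * b * x <= exp (- (b * x)) * exp (- (a * (b * x)))).
  { rewrite <- exp_plus; assert (H := exp_ineq1_le (- (b * x) + - (a * (b * x)))); lra. }
  assert (Hsat := mul_exp_opp_le_sat a y).
  assert (P1 := exp_pos (- (b * x))); assert (P2 := exp_pos (- (a * (b * x)))).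
  assert (a * (b * x * exp (- (b * x))) * exp (- (a * (b * x)))
          <= a * y * exp (- (a * y))).
  { apply Rmult_le_compat; [repeat apply Rmult_le_pos; lra | lra | apply Rmult_le_compat_l; lra | exact Hexp]. }
  assert (a * b * x * (1 - (a + 1) * b * x) <= a * b * x * (exp (- (b * x)) * exp (- (a * (b * x)))))
    by (apply Rmult_le_compat_l; [repeat apply Rmult_le_pos |]; lra).
  lra.
Qed.

Lemma sat2_fixed_exists (a b : R) :
  0 < a -> 0 < b -> 1 < a * b -> exists x, 0 < x /\ sat2 a b x = x.
Proof.
  intros Ha Hb Hab.
  set (x0 := (1 - / (a * b)) / (2 * ((a + 1) * b))).
  assert (Hinv : 0 < / (a * b) < 1).
  { split; [apply Rinv_0_lt_compat; lra |].
    rewrite <- Rinv_1; apply Rinv_lt_contravar; lra. }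
  assert (Hx0 : 0 < x0) by (unfold x0; apply Rdiv_lt_0_compat; nra).
  assert (Ex0 : a * b * (1 - (a + 1) * b * x0) = (a * b + 1) / 2).
  { unfold x0; field; split; lra. }
  assert (Hlow := sat2_ge_quadratic a b x0 ltac:(lra) ltac:(lra) ltac:(lra)).
  assert (Hgt : x0 < sat2 a b x0) by nra.
  assert (Hx01 : x0 < 1) by (assert (H := sat2_lt1 a b x0); lra).
  destruct (IVT (fun x => x - sat2 a b x) x0 1) as [z [Hz Ez]].
  - unfold sat2, sat; reg.
  - exact Hx01.
  - lra.
  - assert (H := sat2_lt1 a b 1); lra.
  - exists z; split; lra.
Qed.

(* The fixed point moves up with the rates: below it the ratio [sat2 x / x]
   exceeds [1], so a smaller fixed point of larger rates is impossible. *)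
Lemma sat2_fixed_le (a a' b b' x x' : R) :
  0 < a <= a' -> 0 < b <= b' ->
  0 < x -> sat2 a b x = x -> 0 < x' -> sat2 a' b' x' = x' -> x <= x'.
Proof.
  intros Ha Hb Hx Ex Hx' Ex'.
  destruct (Rle_or_lt x x') as [| Hlt]; [assumption | exfalso].
  assert (R1 := sat2_ratio_lt a b x' x ltac:(lra) ltac:(lra) ltac:(lra)).
  rewrite Ex in R1.
  assert (sat2 a b x' <= sat2 a' b' x') by (apply sat2_le_compat; lra).
  nra.
Qed.

Definition coupled_sol (a b : R) (t : R * R) : Prop :=
  0 < fst t /\ 0 < snd t /\
  exp (- (a * snd t)) = 1 - fst t /\ exp (- (b * fst t)) = 1 - snd t.

Lemma coupled_solE (a b : R) (t : R * R) :
  coupled_sol a b t -> sat2 a b (fst t) = fst t /\ snd t = sat b (fst t).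
Proof.
  intros (_ & _ & Ea & Eb); unfold sat2, sat.
  rewrite Eb; replace (1 - (1 - snd t)) with (snd t) by ring.
  rewrite Ea; split; ring.
Qed.

Lemma coupled_sol_exists (a b : R) :
  0 < a -> 0 < b -> 1 < a * b -> exists t, coupled_sol a b t.
Proof.
  intros Ha Hb Hab.
  destruct (sat2_fixed_exists a b Ha Hb Hab) as [x [Hx Ex]].
  assert (Hy := sat_gt0 b x Hb Hx).
  exists (x, sat b x); unfold coupled_sol, sat2, sat in *; simpl.
  replace (1 - (1 - exp (- (b * x)))) with (exp (- (b * x))) by ring.
  repeat split; lra.
Qed.

Lemma coupled_sol_le (a a' b b' : R) (t t' : R * R) :
  0 < a <= a' -> 0 < b <= b' -> coupled_sol a b t -> coupled_sol a' b' t' ->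
  fst t <= fst t' /\ snd t <= snd t'.
Proof.
  intros Ha Hb Ht Ht'.
  destruct (coupled_solE a b t Ht) as [Ex ->].
  destruct (coupled_solE a' b' t' Ht') as [Ex' ->].
  destruct Ht as [Hx _]; destruct Ht' as [Hx' _].
  assert (Hle : fst t <= fst t') by (apply (sat2_fixed_le a a' b b'); assumption).
  split; [exact Hle | apply sat_le_compat; lra].
Qed.

Lemma coupled_sol_gain_lt1 (a b : R) (t : R * R) :
  coupled_sol a b t -> (1 - fst t) * (1 - snd t) * (a * b) < 1.
Proof.
  intros (Hx & Hy & Ea & Eb).
  assert (Pa : 0 < 1 - fst t) by (rewrite <- Ea; apply exp_pos).
  assert (Pb : 0 < 1 - snd t) by (rewrite <- Eb; apply exp_pos).
  assert (Hua : 0 < a * snd t).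
  { apply Ropp_lt_cancel, exp_lt_inv; rewrite Ropp_0, exp_0, Ea; lra. }
  assert (Hub : 0 < b * fst t).
  { apply Ropp_lt_cancel, exp_lt_inv; rewrite Ropp_0, exp_0, Eb; lra. }
  assert (La := mul_exp_opp_lt (a * snd t) ltac:(lra)).
  assert (Lb := mul_exp_opp_lt (b * fst t) ltac:(lra)).
  rewrite Ea in La; rewrite Eb in Lb.
  assert (Hprod : a * snd t * (1 - fst t) * (b * fst t * (1 - snd t)) < fst t * snd t).
  { apply Rle_lt_trans with (a * snd t * (1 - fst t) * snd t).
    - apply Rmult_le_compat_l; [apply Rmult_le_pos |]; lra.
    - apply Rmult_lt_compat_r; lra. }
  apply (Rmult_lt_reg_l (fst t * snd t)); nra.
Qed.

Lemma rates_mul (B k aL aR : R) :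
  0 < k -> B * sqrt k * aR * (B / sqrt k * aL) = B ^ 2 * aL * aR.
Proof. intro Hk; assert (0 < sqrt k) by (apply sqrt_lt_R0; lra); field; lra. Qed.

Lemma sqrt_mul_gt1 (B aL aR : R) :
  0 < B -> 0 <= aL -> 0 <= aR -> sqrt (aL * aR) * B > 1 ->
  0 < aL /\ 0 < aR /\ 1 < B ^ 2 * aL * aR.
Proof.
  intros HB HL HR H.
  assert (Hp : 0 < aL * aR).
  { destruct (Rle_or_lt (aL * aR) 0) as [Hn | Hp]; [| exact Hp].
    replace (aL * aR) with 0 in H by nra; rewrite sqrt_0 in H; lra. }
  assert (S := sqrt_sqrt (aL * aR) ltac:(lra)); assert (Sp := sqrt_pos (aL * aR)).
  repeat split; nra.
Qed.

Lemma theta_sol (B k aL aR : R) :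
  0 < k -> 0 < B -> 0 <= aL -> 0 <= aR -> sqrt (aL * aR) * B > 1 ->
  coupled_sol (B * sqrt k * aR) (B / sqrt k * aL) (theta B k aL aR).
Proof.
  intros Hk HB HL HR H.
  destruct (sqrt_mul_gt1 B aL aR HB HL HR H) as (PL & PR & Hab).
  assert (Sk : 0 < sqrt k) by (apply sqrt_lt_R0; lra).
  unfold theta; destruct (Rle_dec (sqrt (aL * aR) * B) 1); [lra |].
  apply epsilon_spec, coupled_sol_exists.
  - apply Rmult_lt_0_compat; [apply Rmult_lt_0_compat |]; assumption.
  - apply Rmult_lt_0_compat; [apply Rdiv_lt_0_compat |]; assumption.
  - rewrite rates_mul; assumption.
Qed.

Lemma theta_small (B k aL aR : R) :
  ~ sqrt (aL * aR) * B > 1 -> theta B k aL aR = (0, 0).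
Proof. intro H; unfold theta; destruct (Rle_dec (sqrt (aL * aR) * B) 1); [reflexivity | lra]. Qed.

Lemma theta_ge0 (B k aL aR : R) : 0 < k -> 0 < B -> 0 <= aL -> 0 <= aR ->
  0 <= fst (theta B k aL aR) /\ 0 <= snd (theta B k aL aR).
Proof.
  intros Hk HB HL HR.
  destruct (Rlt_dec 1 (sqrt (aL * aR) * B)) as [H | H].
  - destruct (theta_sol B k aL aR Hk HB HL HR H) as (P1 & P2 & _); lra.
  - rewrite (theta_small B k aL aR H); simpl; lra.
Qed.

Lemma theta_le (B k aL aR aL' aR' : R) :
  0 < k -> 0 < B -> 0 <= aL <= aL' -> 0 <= aR <= aR' ->
  fst (theta B k aL aR) <= fst (theta B k aL' aR') /\
  snd (theta B k aL aR) <= snd (theta B k aL' aR').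
Proof.
  intros Hk HB HL HR.
  destruct (Rlt_dec 1 (sqrt (aL * aR) * B)) as [H | H].
  - assert (H' : sqrt (aL' * aR') * B > 1).
    { assert (sqrt (aL * aR) <= sqrt (aL' * aR')) by (apply sqrt_le_1_alt; nra); nra. }
    destruct (sqrt_mul_gt1 B aL aR HB ltac:(lra) ltac:(lra) H) as (PL & PR & _).
    assert (Sk : 0 < sqrt k) by (apply sqrt_lt_R0; lra).
    assert (Ha : 0 < B * sqrt k) by (apply Rmult_lt_0_compat; lra).
    assert (Hb : 0 < B / sqrt k) by (apply Rdiv_lt_0_compat; lra).
    apply (coupled_sol_le (B * sqrt k * aR) (B * sqrt k * aR')
                          (B / sqrt k * aL) (B / sqrt k * aL')).
    + split; [apply Rmult_lt_0_compat | apply Rmult_le_compat_l]; lra.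
    + split; [apply Rmult_lt_0_compat | apply Rmult_le_compat_l]; lra.
    + apply theta_sol; lra.
    + apply theta_sol; lra.
  - rewrite (theta_small B k aL aR H); simpl.
    apply theta_ge0; lra.
Qed.

Theorem mainTheorem11 (k B : R) (hk : 1 <= k) (hB : 0 < B) :
  (forall aL aR aL' aR' : R,
     0 <= aL <= 1 -> 0 <= aR <= 1 -> 0 <= aL' <= 1 -> 0 <= aR' <= 1 ->
     aL <= aL' -> aR <= aR' ->
     fst (F B k aL aR) <= fst (F B k aL' aR') /\
     snd (F B k aL aR) <= snd (F B k aL' aR')) /\
  (forall aL aR : R,
     0 <= aL <= 1 -> 0 <= aR <= 1 -> sqrt (aL * aR) * B > 1 ->
     1 - (1 - fst (theta B k aL aR)) * (1 - snd (theta B k aL aR))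
           * B ^ 2 * aL * aR > 0).
Proof.
  split.
  - intros aL aR aL' aR' HL HR HL' HR' Hl Hr; unfold F; simpl.
    destruct (theta_le B k aL aR aL' aR' ltac:(lra) hB ltac:(lra) ltac:(lra)) as [T1 T2].
    destruct (theta_ge0 B k aL aR ltac:(lra) hB ltac:(lra) ltac:(lra)) as [P1 P2].
    split; apply Rmult_le_compat_r; nra.
  - intros aL aR HL HR H.
    assert (G := coupled_sol_gain_lt1 _ _ _ (theta_sol B k aL aR ltac:(lra) hB ltac:(lra) ltac:(lra) H)).
    rewrite rates_mul in G by lra.
    lra.
Qed.
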